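(* Let $n\in\mathbb N$ and $M>0$. Let $X,Y$ be independent, identically distributed real random variables with $|X|\le\big(\frac{2n-1}{3M}\big)^{\frac{1}{2n-1}}$ almost surely and ${\bf E}[X^{2j-1}]=0$ for all $j=1,\dots,n$. Then $${\bf E}\big[|X-Y|^{2n+1}\big]-2\,{\bf E}\big[X^{2n+1}\big]-M\big({\bf E}[X^{2n}]\big)^2\ge 0.$$ *)

From HB Require Import structures.
From mathcomp Require Import all_boot all_order all_algebra.
From mathcomp Require Import all_classical all_reals all_analysis.
Set Implicit Arguments.
Unset Strict Implicit.
Unset Printing Implicit Defensive.
Import Order.TTheory GRing.Theory Num.Theory.
Local Open Scope classical_set_scope.
Local Open Scope ring_scope.

Definition independent_RV d (T : measurableType d) (R : realType)
  (P : probability T R) (X Y : {RV P >-> R}) : Prop :=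
  forall A B : set R, measurable A -> measurable B ->
    P (X @^-1` A `&` Y @^-1` B) = (P (X @^-1` A) * P (Y @^-1` B))%E.

Definition identically_distributed d (T : measurableType d) (R : realType)
  (P : probability T R) (X Y : {RV P >-> R}) : Prop :=
  forall A : set R, measurable A -> distribution P X A = distribution P Y A.

From HB Require Import structures.
From mathcomp Require Import all_boot all_order all_algebra.
From mathcomp Require Import all_classical all_reals all_analysis.
From mathcomp Require Import measurable_realfun.
From mathcomp.algebra_tactics Require Import ring lra.
From mathcomp Require Import zify.
Import Order.TTheory GRing.Theory Num.Theory.

Set Implicit Arguments.
Unset Strict Implicit.
Unset Printing Implicit Defensive.

Local Open Scope classical_set_scope.
Local Open Scope ring_scope.

(* Write m = 2n and K = (2n-1)/3, and let phi(t) = (m+1) t^m for t >= 0 and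
   phi(t) = - K t^m for t < 0 (the [corrector] below).  The [kernel]
     G(x, y) = |x - y|^(m+1) - x^(m+1) - y^(m+1) - M x^m y^m + x phi(y) + y phi(x)
   is nonnegative on [-c, c]^2 as soon as M c^(m-1) <= K, which is exactly what
   the bound on |X| says.  This is a case analysis on the signs of x and y: for
   0 <= y <= x use the tangent bound x^(m+1) <= (x-y)^(m+1) + (m+1) x^m y, for
   x >= 0 >= y the four extreme terms of the binomial expansion of
   (x + |y|)^(m+1), and throughout M |x|^m <= K |x|.  Taking expectations,
   independence turns E[X phi(Y)] into E[X] E[phi(Y)] = 0 (so only the first
   moment condition is needed) and equal laws give E[Y^k] = E[X^k]; what is
   left of E[G(X, Y)] >= 0 is the claimed inequality. *)

Lemma exprSD_le_tangent (R : numDomainType) (a b : R) k : 0 <= a -> 0 <= b ->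
  (a + b) ^+ k.+1 <= a ^+ k.+1 + k.+1%:R * (a + b) ^+ k * b.
Proof.
move=> a0 b0; rewrite -lerBlDl subrXX addrC addKr mulrC ler_wpM2r //.
rewrite mulr_natl -[in leRHS](card_ord k.+1) -sumr_const ler_sum // => i _.
have ik : (i <= k)%N by rewrite -ltnS.
rewrite -[in leRHS](subnK ik) exprD ler_wpM2l ?exprn_ge0 ?addr_ge0 //.
by rewrite lerXn2r ?nnegrE ?addr_ge0 ?lerDl.
Qed.

Lemma exprD_ge_extreme_terms (R : numDomainType) (a b : R) k : 0 <= a -> 0 <= b ->
  a ^+ k.+3 + k.+3%:R * a ^+ k.+2 * b + k.+3%:R * a * b ^+ k.+2 + b ^+ k.+3
  <= (a + b) ^+ k.+3.
Proof.
move=> a0 b0; rewrite exprDn 2!big_ord_recl 2!big_ord_recr /= /bump /= !add1n.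
rewrite subn0 subn1 subSnn subnn bin0 bin1 binSn binn expr0 !expr1 mulr1 mul1r.
rewrite !mulr1n -2!mulrA !mulr_natl /=.
set middle := \sum_(i < k) _.
have middle_ge0 : 0 <= middle.
  by apply: sumr_ge0 => i _; apply: mulrn_wge0; rewrite mulr_ge0 ?exprn_ge0.
by rewrite -3!addrA 2!lerD2l lerDr.
Qed.

Lemma mulr_exprS_le (R : numDomainType) (M K a c : R) k :
  0 <= M -> M * c ^+ k <= K -> 0 <= a -> a <= c -> M * a ^+ k.+1 <= K * a.
Proof.
move=> M0 McK a0 ac; rewrite exprSr mulrA ler_wpM2r //.
by apply: le_trans McK; rewrite ler_wpM2l // lerXn2r // nnegrE (le_trans a0).
Qed.

Lemma powR_invn_exprn (R : realType) (a : R) k : 0 <= a -> (0 < k)%N ->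
  (a `^ (1 / k%:R)) ^+ k = a.
Proof.
move=> a0 k_gt0; rewrite -powR_mulrn ?powR_ge0 // -powRrM div1r mulVf ?powRr1 //.
by rewrite pnatr_eq0 -lt0n.
Qed.

Section expectation.
Context d (T : measurableType d) (R : realType) (P : probability T R).
Local Open Scope ereal_scope.

Lemma Lfun1_ae_bounded (h : T -> R) (C : R) : measurable_fun setT h ->
  {ae P, forall w, `|h w| <= C}%R -> h \in Lfun P 1.
Proof.
move=> mh hC; apply/Lfun1_integrable/integrableP; split; first exact/measurable_EFinP.
apply: (le_lt_trans (integral_le_bound (`|C|%:E) _ _ _ _)) => //.
- exact/measurable_EFinP.
- by apply: filterS hC => w hw _; rewrite /= lee_fin (le_trans hw) // ler_norm.
- by rewrite lte_mul_pinfty // ?lee_fin // ltey_eq fin_num_measure.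
Qed.

Lemma Lfun1_exprn (h : T -> R) (b : R) k : measurable_fun setT h ->
  {ae P, forall w, `|h w| <= b}%R -> (fun w => h w ^+ k)%R \in Lfun P 1.
Proof.
move=> mh hb; apply: (Lfun1_ae_bounded (C := (b ^+ k)%R)); first exact: measurable_funX.
by apply: filterS hb => w hw; rewrite normrX lerXn2r // nnegrE (le_trans _ hw).
Qed.

Lemma Lfun1_ge0 (h : T -> R) : measurable_fun setT h -> (forall w, 0 <= h w)%R ->
  'E_P[h] \is a fin_num -> h \in Lfun P 1.
Proof.
move=> mh h0; rewrite unlock => hfin.
apply/Lfun1_integrable/integrableP; split; first exact/measurable_EFinP.
under eq_integral => w _ do rewrite /= ger0_norm //.
by move: hfin; rewrite ge0_fin_numE // integral_ge0 // => w _; rewrite lee_fin.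
Qed.

Lemma Lfun1_funrpos (h : T -> R) : h \in Lfun P 1 -> (h^\+)%R \in Lfun P 1.
Proof. by move=> /Lfun1_integrable/(integrable_funrpos measurableT)/Lfun1_integrable. Qed.

Lemma Lfun1_funrneg (h : T -> R) : h \in Lfun P 1 -> (h^\-)%R \in Lfun P 1.
Proof. by move=> /Lfun1_integrable/(integrable_funrneg measurableT)/Lfun1_integrable. Qed.

Lemma expectation_ae_ge0 (h : T -> R) : h \in Lfun P 1 ->
  {ae P, forall w, 0 <= h w}%R -> 0 <= 'E_P[h].
Proof.
move=> /Lfun1_integrable/integrableP[mh _] h0; rewrite unlock.
rewrite (ae_eq_integral (EFin \o (h^\+)%R)) //.
- by apply: integral_ge0 => w _; rewrite lee_fin.
- by apply/measurable_EFinP; apply: measurable_funrpos; apply/measurable_EFinP.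
- by apply: filterS h0 => w hw _ /=; rewrite /funrpos max_l.
Qed.

Lemma identically_distributed_ae (X Y : {RV P >-> R}) (A : set R) :
  identically_distributed X Y -> measurable A ->
  {ae P, forall w, A (X w)} -> {ae P, forall w, A (Y w)}.
Proof.
move=> XeqY mA [N [mN PN XN]]; have mCA := measurableC mA.
exists (Y @^-1` ~` A); split => //; first exact: measurable_funPTI.
apply/eqP; rewrite eq_le measure_ge0 andbT -PN.
rewrite -[P (Y @^-1` _)]/(distribution P Y _) -XeqY //.
by apply: le_measure XN; rewrite !inE //; exact: (measurable_funPTI X mCA).
Qed.

Lemma identically_distributed_expectation (X Y : {RV P >-> R}) (f : R -> R) :
  identically_distributed X Y -> measurable_fun setT f ->
  f \o X \in Lfun P 1 -> f \o Y \in Lfun P 1 -> 'E_P[f \o X] = 'E_P[f \o Y].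
Proof.
move=> XeqY mf /Lfun1_integrable iX /Lfun1_integrable iY; rewrite unlock.
have mEf : measurable_fun setT (EFin \o f) by exact/measurable_EFinP.
rewrite -[LHS](integral_distribution mEf iX) -[RHS](integral_distribution mEf iY).
by apply: eq_measure_integral => A mA _; exact: XeqY.
Qed.

Lemma independent_RV_sym (X Y : {RV P >-> R}) :
  independent_RV X Y -> independent_RV Y X.
Proof. by move=> XY A B mA mB; rewrite setIC XY // muleC. Qed.

Section independent_product.
Variables (X Y : {RV P >-> R}).
Hypothesis XY : independent_RV X Y.

(* The law of (X, Y) is the product of the laws, then Tonelli. *)
Lemma independent_expectation_mul_ge0 (f g : R -> R) :
  measurable_fun setT f -> measurable_fun setT g ->
  (forall x, 0 <= f x)%R -> (forall y, 0 <= g y)%R ->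
  'E_P[(f \o X) \* (g \o Y)] = 'E_P[f \o X] * 'E_P[g \o Y].
Proof.
move=> mf mg f0 g0; rewrite unlock.
have mXY : measurable_fun setT (fun w => (X w, Y w)) by exact: measurable_fun_pair.
pose XY' : {mfun T >-> (R * R)%type} :=
  HB.pack (fun w => (X w, Y w)) (isMeasurableFun.Build _ _ _ _ _ mXY).
have mfg : measurable_fun setT (fun z : R * R => (f z.1 * g z.2)%:E).
  apply/measurable_EFinP; apply: measurable_funM.
    exact: measurableT_comp mf measurable_fst.
  exact: measurableT_comp mg measurable_snd.
have fg0 (z : R * R) : 0 <= (f z.1 * g z.2)%:E by rewrite lee_fin mulr_ge0.
have mEf : measurable_fun setT (EFin \o f) by exact/measurable_EFinP.
have mEg : measurable_fun setT (EFin \o g) by exact/measurable_EFinP.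
transitivity (\int[distribution P XY']_z (f z.1 * g z.2)%:E).
  by rewrite ge0_integral_distribution.
transitivity (\int[distribution P X \x distribution P Y]_z (f z.1 * g z.2)%:E).
  apply: eq_measure_integral => A mA _; apply/esym.
  by apply: product_measure_unique => // B C mB mC; exact: XY.
rewrite fubini_tonelli1 // /fubini_F /=.
transitivity (\int[distribution P X]_x ((f x)%:E * \int[distribution P Y]_y (g y)%:E)).
  apply: eq_integral => x _.
  by rewrite -ge0_integralZl // => [y _|]; rewrite lee_fin.
rewrite ge0_integralZr //; last by apply: integral_ge0 => y _; rewrite lee_fin.
- by rewrite !ge0_integral_distribution // => y; rewrite lee_fin.
- by move=> x _; rewrite lee_fin.
Qed.

Let independent_Lfun1_mul_ge0 (f g : R -> R) :
  measurable_fun setT f -> measurable_fun setT g ->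
  (forall x, 0 <= f x)%R -> (forall y, 0 <= g y)%R ->
  f \o X \in Lfun P 1 -> g \o Y \in Lfun P 1 -> ((f \o X) \* (g \o Y))%R \in Lfun P 1.
Proof.
move=> mf mg f0 g0 fX gY; apply: Lfun1_ge0 => [|w|].
- by apply: measurable_funM; apply: measurableT_comp.
- by rewrite /= mulr_ge0.
- by rewrite independent_expectation_mul_ge0 // fin_numM // expectation_fin_num.
Qed.

Variables (f g : R -> R).
Hypotheses (mf : measurable_fun setT f) (mg : measurable_fun setT g)
  (fX : f \o X \in Lfun P 1) (gY : g \o Y \in Lfun P 1).

Let fpX : (f^\+ \o X)%R \in Lfun P 1 := Lfun1_funrpos fX.
Let fnX : (f^\- \o X)%R \in Lfun P 1 := Lfun1_funrneg fX.
Let gpY : (g^\+ \o Y)%R \in Lfun P 1 := Lfun1_funrpos gY.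
Let gnY : (g^\- \o Y)%R \in Lfun P 1 := Lfun1_funrneg gY.

Let Lfun1_parts :
  [/\ ((f^\+ \o X) \* (g^\+ \o Y))%R \in Lfun P 1,
      ((f^\- \o X) \* (g^\- \o Y))%R \in Lfun P 1,
      ((f^\+ \o X) \* (g^\- \o Y))%R \in Lfun P 1
    & ((f^\- \o X) \* (g^\+ \o Y))%R \in Lfun P 1].
Proof.
have [mfp mfn] := (measurable_funrpos mf, measurable_funrneg mf).
have [mgp mgn] := (measurable_funrpos mg, measurable_funrneg mg).
by split; apply: independent_Lfun1_mul_ge0.
Qed.

Let funrposBneg_comp (h : R -> R) (Z : {RV P >-> R}) :
  h \o Z = ((h^\+ \o Z) \- (h^\- \o Z))%R.
Proof. by apply/funext => w; rewrite /= -[in LHS](funrposBneg h) !fctE. Qed.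

Let mul_parts : ((f \o X) \* (g \o Y) =
  ((f^\+ \o X) \* (g^\+ \o Y) \+ (f^\- \o X) \* (g^\- \o Y))
  \- ((f^\+ \o X) \* (g^\- \o Y) \+ (f^\- \o X) \* (g^\+ \o Y)))%R.
Proof.
apply/funext => w; rewrite [f \o X]funrposBneg_comp [g \o Y]funrposBneg_comp /=.
ring.
Qed.

Lemma independent_Lfun1_mul : ((f \o X) \* (g \o Y))%R \in Lfun P 1.
Proof. by have [? ? ? ?] := Lfun1_parts; rewrite mul_parts rpredB ?rpredD. Qed.

Lemma independent_expectation_mul :
  'E_P[(f \o X) \* (g \o Y)] = 'E_P[f \o X] * 'E_P[g \o Y].
Proof.
have [? ? ? ?] := Lfun1_parts.
have [mfp mfn] := (measurable_funrpos mf, measurable_funrneg mf).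
have [mgp mgn] := (measurable_funrpos mg, measurable_funrneg mg).
rewrite mul_parts expectationB ?rpredD // !expectationD //.
rewrite !independent_expectation_mul_ge0 //.
rewrite [f \o X]funrposBneg_comp [g \o Y]funrposBneg_comp !expectationB //.
have := expectation_fin_num fpX; have := expectation_fin_num fnX.
have := expectation_fin_num gpY; have := expectation_fin_num gnY.
move=> /fineK <- /fineK <- /fineK <- /fineK <-.
by rewrite -!EFinM -!EFinD; congr EFin; ring.
Qed.

End independent_product.

End expectation.

Section kernel.
Variables (R : realFieldType) (n : nat) (M : R).
Local Notation m := (2 * n)%N.
Local Notation K := ((2 * n).-1%:R / 3 : R).

Definition corrector (t : R) : R :=
  if 0 <= t then m.+1%:R * t ^+ m else - K * t ^+ m.

Definition kernel (x y : R) : R :=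
  `|x - y| ^+ m.+1 - x ^+ m.+1 - y ^+ m.+1 - M * (x ^+ m * y ^+ m)
  + x * corrector y + y * corrector x.

Lemma kernelC x y : kernel x y = kernel y x.
Proof. by rewrite /kernel distrC; ring. Qed.

Lemma normr_corrector_le t : `|corrector t| <= m.+1%:R * `|t| ^+ m.
Proof.
have K_le : K <= m.+1%:R.
  by rewrite ler_pdivrMr // -natrM ler_nat; case: (m) => //= k; lia.
rewrite /corrector -normrX.
by case: ifP => _; rewrite normrM ler_wpM2r // ?normrN ger0_norm ?divr_ge0.
Qed.

Variable c : R.
Hypotheses (n_gt0 : (0 < n)%N) (M_ge0 : 0 <= M) (Mc : M * c ^+ m.-1 <= K).

Let m_gt0 : (0 < m)%N. Proof. by rewrite muln_gt0. Qed.

Let K_bounds : [/\ 0 <= K, K <= m%:R & 2 * K <= m.+1%:R].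
Proof.
have em : m%:R = m.-1%:R + 1 :> R by rewrite natr1 prednK.
have em1 : m.+1%:R = m.-1%:R + 2 :> R by rewrite -natr1 em; ring.
have : 0 <= m.-1%:R :> R by rewrite ler0n.
by rewrite em em1; split; lra.
Qed.

Let M_exprn_le a : 0 <= a -> a <= c -> M * a ^+ m <= K * a.
Proof. by move=> a0 ac; have := mulr_exprS_le M_ge0 Mc a0 ac; rewrite prednK. Qed.

Let corrector_ge0E t : 0 <= t -> corrector t = m.+1%:R * t ^+ m.
Proof. by rewrite /corrector => ->. Qed.

Let corrector_le0E t : t <= 0 -> corrector t = - K * t ^+ m.
Proof.
rewrite /corrector; case: ifP => // t_ge0 t_le0.
have -> : t = 0 by apply/le_anti; rewrite t_le0 t_ge0.
by rewrite expr0n gtn_eqF // !mulr0.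
Qed.

Let exprN_even (b : R) : (- b) ^+ m = b ^+ m.
Proof. by rewrite !exprM sqrrN. Qed.

Let exprN_odd (b : R) : (- b) ^+ m.+1 = - b ^+ m.+1.
Proof. by rewrite !exprSr exprN_even mulrN. Qed.

Let kernel_ge0_ordered x y : 0 <= y -> y <= x -> x <= c -> 0 <= kernel x y.
Proof.
move=> y0 yx xc; have x0 := le_trans y0 yx; have [_ Km _] := K_bounds.
rewrite /kernel !corrector_ge0E // ger0_norm ?subr_ge0 //.
have := exprSD_le_tangent m (_ : 0 <= x - y) y0; rewrite subrK subr_ge0 => /(_ yx).
have := ler_wpM2r (exprn_ge0 m y0) (M_exprn_le x0 xc).
have : y ^+ m.+1 <= x * y ^+ m by rewrite exprSr [x * _]mulrC ler_wpM2l ?exprn_ge0.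
have : 0 <= (m%:R - K) * (x * y ^+ m) by rewrite mulr_ge0 ?subr_ge0 ?mulr_ge0 ?exprn_ge0.
by rewrite -[m.+1%:R]natr1; lra.
Qed.

Let kernel_ge0_opposite_signs x b : 0 <= x -> x <= c -> 0 <= b ->
  0 <= kernel x (- b).
Proof.
move=> x0 xc b0; have [_ _ K2] := K_bounds.
have Nb_le0 : - b <= 0 by rewrite oppr_le0.
rewrite /kernel (corrector_ge0E x0) (corrector_le0E Nb_le0) opprK.
rewrite (ger0_norm (addr_ge0 x0 b0)) exprN_even exprN_odd.
have := exprD_ge_extreme_terms m.-2 x0 b0.
have -> : m.-2.+2 = m by lia.
have := ler_wpM2r (exprn_ge0 m b0) (M_exprn_le x0 xc).
have : 0 <= (m.+1%:R - 2 * K) * (x * b ^+ m).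
  by rewrite mulr_ge0 ?subr_ge0 ?mulr_ge0 ?exprn_ge0.
have : 0 <= b ^+ m.+1 by rewrite exprn_ge0.
lra.
Qed.

Let kernel_ge0_nonpos a b : 0 <= a -> a <= c -> 0 <= b -> 0 <= kernel (- a) (- b).
Proof.
move=> a0 ac b0; have [K0 _ _] := K_bounds.
rewrite /kernel !corrector_le0E ?oppr_le0 // !exprN_even !exprN_odd.
have := ler_wpM2r (exprn_ge0 m b0) (M_exprn_le a0 ac).
have : 0 <= `|- a - - b| ^+ m.+1 by rewrite exprn_ge0.
have : 0 <= a ^+ m.+1 + b ^+ m.+1 by rewrite addr_ge0 ?exprn_ge0.
have := mulr_ge0 K0 (mulr_ge0 b0 (exprn_ge0 m a0)).
lra.
Qed.

Lemma kernel_ge0 x y : `|x| <= c -> `|y| <= c -> 0 <= kernel x y.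
Proof.
wlog yx : x y / y <= x.
  move=> ordered xc yc; have [yx|/ltW xy] := leP y x; first exact: ordered.
  by rewrite kernelC; exact: ordered.
rewrite !ler_norml => /andP[cx xc] /andP[_ yc].
have [y0|y_lt0] := leP 0 y; first exact: kernel_ge0_ordered.
have Ny_ge0 : 0 <= - y by rewrite oppr_ge0 ltW.
have [x0|/ltW x_le0] := leP 0 x.
  by rewrite -(opprK y); exact: kernel_ge0_opposite_signs.
rewrite -(opprK x) -(opprK y).
by apply: kernel_ge0_nonpos; rewrite // ?oppr_ge0 // lerNl.
Qed.

End kernel.

Lemma measurable_corrector (R : realType) n : measurable_fun setT (corrector n : R -> R).
Proof.
apply: measurable_fun_ifT.
- exact: measurable_fun_ler.
- by apply: measurable_funM => //; exact: measurable_funX.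
- by apply: measurable_funM => //; exact: measurable_funX.
Qed.

Section kernel_expectation.
Context d (T : measurableType d) (R : realType) (P : probability T R).
Variables (X Y : {RV P >-> R}) (n : nat) (M c : R).
Hypotheses (XY : independent_RV X Y) (XeqY : identically_distributed X Y)
  (Xc : {ae P, forall w, `|X w| <= c}).
Local Notation m := (2 * n)%N.

Let Yc : {ae P, forall w, `|Y w| <= c}.
Proof.
apply: (identically_distributed_ae (A := [set t : R | `|t| <= c])) XeqY _ Xc.
have -> : [set t : R | `|t| <= c] = `[- c, c]%classic.
  by apply/seteqP; split => t /=; rewrite in_itv /= ler_norml.
exact: measurable_itv.
Qed.

Let mexprn k : measurable_fun setT (fun x : R => x ^+ k).
Proof. exact: measurable_funX. Qed.

Let mid : measurable_fun setT (@id R).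
Proof. exact: measurable_id. Qed.

Let LfunXn k : ((fun x => x ^+ k) \o X) \in Lfun P 1.
Proof. exact: Lfun1_exprn Xc. Qed.

Let LfunYn k : ((fun x => x ^+ k) \o Y) \in Lfun P 1.
Proof. exact: Lfun1_exprn Yc. Qed.

Let LfunX : (id \o X) \in Lfun P 1 := LfunXn 1.
Let LfunY : (id \o Y) \in Lfun P 1 := LfunYn 1.

Let Lfun_corrector (Z : {RV P >-> R}) : {ae P, forall w, `|Z w| <= c} ->
  (corrector n \o Z) \in Lfun P 1.
Proof.
move=> Zc; apply: (Lfun1_ae_bounded (C := m.+1%:R * c ^+ m)).
  exact: measurableT_comp (measurable_corrector n) _.
apply: filterS Zc => w Zw; apply: le_trans (normr_corrector_le _ _) _.
by rewrite ler_wpM2l // lerXn2r // nnegrE (le_trans _ Zw).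
Qed.

Let Lfun_dist : (fun w => `|X w - Y w| ^+ m.+1) \in Lfun P 1.
Proof.
apply: (Lfun1_exprn (b := c + c)).
  by apply: measurableT_comp; [exact: normr_measurable | exact: measurable_funB].
apply: filterS2 Xc Yc => w Xw Yw; rewrite normr_id.
by apply: le_trans (ler_normB _ _) _; exact: lerD.
Qed.

Let Lfun_XnYn : (((fun x => x ^+ m) \o X) \* ((fun x => x ^+ m) \o Y)) \in Lfun P 1.
Proof.
have := independent_Lfun1_mul XY (mexprn m) (mexprn m).
by apply; [exact: LfunXn | exact: LfunYn].
Qed.

Let Lfun_XcorrY : ((id \o X) \* (corrector n \o Y)) \in Lfun P 1.
Proof.
have := independent_Lfun1_mul XY mid (measurable_corrector n).
by apply; [exact: LfunX | exact: Lfun_corrector].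
Qed.

Let Lfun_YcorrX : ((id \o Y) \* (corrector n \o X)) \in Lfun P 1.
Proof.
have := independent_Lfun1_mul (independent_RV_sym XY) mid (measurable_corrector n).
by apply; [exact: LfunY | exact: Lfun_corrector].
Qed.

(* [k \o* f] is [fun w => f w * k], hence the commutation. *)
Let kernelE : (fun w => kernel n M (X w) (Y w)) =
  (fun w => `|X w - Y w| ^+ m.+1) \- ((fun x => x ^+ m.+1) \o X)
  \- ((fun x => x ^+ m.+1) \o Y)
  \- M \o* (((fun x => x ^+ m) \o X) \* ((fun x => x ^+ m) \o Y))
  \+ (id \o X) \* (corrector n \o Y) \+ (id \o Y) \* (corrector n \o X).
Proof. by apply/funext => w; rewrite /kernel [M * _]mulrC. Qed.

Lemma Lfun1_kernel : (fun w => kernel n M (X w) (Y w)) \in Lfun P 1.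
Proof.
have LfunMXnYn := Lfun_scale M (lexx 1) Lfun_XnYn.
rewrite kernelE; apply: rpredD; [apply: rpredD | exact: Lfun_YcorrX].
  exact: (rpredB (rpredB (rpredB Lfun_dist (LfunXn _)) (LfunYn _)) LfunMXnYn).
exact: Lfun_XcorrY.
Qed.

Lemma expectation_kernel : ('E_P[X] = 0)%E ->
  ('E_P[fun w => kernel n M (X w) (Y w)] =
   'E_P[(fun w => `|X w - Y w| ^+ m.+1)%R] - 2%:E * 'E_P[(fun w => X w ^+ m.+1)%R]
   - M%:E * 'E_P[(fun w => X w ^+ m)%R] ^+ 2)%E.
Proof.
move=> EX0; have EidX : ('E_P[id \o X] = 0)%E := EX0.
have EYn k : ('E_P[((fun x => x ^+ k) \o Y)%R] = 'E_P[((fun x => x ^+ k) \o X)%R])%E.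
  exact/esym/(identically_distributed_expectation XeqY (mexprn k)).
have EidY : ('E_P[id \o Y] = 0)%E by rewrite -EidX; exact: (EYn 1%N).
have LfunMXnYn := Lfun_scale M (lexx 1) Lfun_XnYn.
(* the closure instance of [Lfun P 1] is indexed by a proof of [1 <= 1] *)
have /(_ (lexx 1)) L1 := rpredB Lfun_dist (LfunXn m.+1).
have L2 := rpredB L1 (LfunYn m.+1).
have L3 := rpredB L2 LfunMXnYn.
have L4 := rpredD L3 Lfun_XcorrY.
rewrite kernelE (expectationD L4 Lfun_YcorrX) (expectationD L3 Lfun_XcorrY).
rewrite (expectationB L2 LfunMXnYn) (expectationB L1 (LfunYn _)).
rewrite (expectationB Lfun_dist (LfunXn _)) (expectationZl _ Lfun_XnYn).
rewrite (independent_expectation_mul XY (mexprn m) (mexprn m) (LfunXn m) (LfunYn m)).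
rewrite (independent_expectation_mul XY mid (measurable_corrector n) LfunX
  (Lfun_corrector Yc)).
rewrite (independent_expectation_mul (independent_RV_sym XY) mid
  (measurable_corrector n) LfunY (Lfun_corrector Xc)).
rewrite !EYn EidX EidY !mul0e !adde0.
rewrite -(fineK (expectation_fin_num Lfun_dist)).
rewrite -(fineK (expectation_fin_num (LfunXn m.+1))).
rewrite -(fineK (expectation_fin_num (LfunXn m))).
by rewrite -EFin_expe -!EFinM -!EFinD; congr EFin; ring.
Qed.

Lemma expectation_kernel_ge0 :
  (0 < n)%N -> 0 <= M -> M * c ^+ m.-1 <= m.-1%:R / 3 ->
  (0 <= 'E_P[fun w => kernel n M (X w) (Y w)])%E.
Proof.
move=> n_gt0 M_ge0 Mc; apply: expectation_ae_ge0 Lfun1_kernel _.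
by apply: filterS2 Xc Yc => w; exact: kernel_ge0.
Qed.

End kernel_expectation.

Theorem proposition1 (d : measure_display) (T : measurableType d)
  (R : realType) (P : probability T R) (X Y : {RV P >-> R})
  (n : nat) (M : R) :
  (0 < n)%N -> 0 < M ->
  independent_RV X Y -> identically_distributed X Y ->
  {ae P, forall w,
     `|X w| <= (((2 * n - 1)%N%:R / (3 * M)) `^ (1 / (2 * n - 1)%N%:R))} ->
  (forall j : nat, (1 <= j <= n)%N ->
     ('E_P[(fun w => X w ^+ (2 * j - 1))%R] = 0)%E) ->
  (0 <= 'E_P[(fun w => `|X w - Y w| ^+ (2 * n + 1))%R]
        - 2%:E * 'E_P[(fun w => X w ^+ (2 * n + 1))%R]
        - M%:E * ('E_P[(fun w => X w ^+ (2 * n))%R]) ^+ 2)%E.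
Proof.
move=> n_gt0 M_gt0 XY XeqY; rewrite subn1 !addn1 => Xc odd_moments.
have EX0 : ('E_P[X] = 0)%E := odd_moments 1%N n_gt0.
have Mc : M * (((2 * n).-1%:R / (3 * M)) `^ (1 / (2 * n).-1%:R)) ^+ (2 * n).-1
          <= (2 * n).-1%:R / 3.
  have k_gt0 : (0 < (2 * n).-1)%N by lia.
  rewrite powR_invn_exprn //; last by rewrite divr_ge0 // mulr_ge0 // ltW.
  by rewrite mulrC invfM mulrA mulfVK ?gt_eqF.
have := expectation_kernel_ge0 XY XeqY Xc n_gt0 (ltW M_gt0) Mc.
by rewrite (expectation_kernel n M XY XeqY Xc EX0).
Qed.
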